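(* Let $\mathbb{F}$ be a finite field and $\alpha\in\mathbb{F}$ with $\mathrm{ord}(\alpha)=n$. Let $H\in\mathbb{F}[z]^{(n-1)\times n}$ be the matrix whose entry in row $i$ ($i=1,\ldots,n-1$) and column $j$ ($j=1,\ldots,n$) is $(z-\alpha^{n-j+1})^i$, i.e. \[ H=\begin{pmatrix} z-\alpha^n&z-\alpha^{n-1}&\cdots&z-\alpha\\ (z-\alpha^n)^2&(z-\alpha^{n-1})^2&\cdots&(z-\alpha)^2\\ \vdots&\vdots&&\vdots\\ (z-\alpha^n)^{n-1}&(z-\alpha^{n-1})^{n-1}&\cdots&(z-\alpha)^{n-1} \end{pmatrix}. \] Then (1) $H$ is right invertible, and (2) $GH^{\mathsf T}=0$ where $G=\sum_{\nu=0}^{n-1}z^\nu\begin{pmatrix}1&\alpha^\nu&\alpha^{2\nu}&\ldots&\alpha^{(n-1)\nu}\end{pmatrix}\in\mathbb{F}[z]^{1\times n}$. Consequently, $H$ is a parity check matrix of the convolutional code $\mathcal{C}=\mathrm{im}\,G$, i.e. $\mathcal{C}=\{v\in\mathbb{F}[z]^n\mid vH^{\mathsf T}=0\}$.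
   Context: $\mathrm{ord}(\alpha)$ is the multiplicative order of $\alpha$. A polynomial matrix $M\in\mathbb{F}[z]^{k\times n}$ is right invertible if $M\tilde M=I_k$ for some $\tilde M\in\mathbb{F}[z]^{n\times k}$. For a convolutional code $\mathcal{C}=\mathrm{im}\,G=\{uG\mid u\in\mathbb{F}[z]\}$ with right invertible $G\in\mathbb{F}[z]^{1\times n}$, a parity check matrix is a right invertible $H\in\mathbb{F}[z]^{(n-1)\times n}$ with $\mathcal{C}=\{v\in\mathbb{F}[z]^n\mid vH^{\mathsf T}=0\}$. *)

From HB Require Import structures.
From mathcomp Require Import all_boot all_order all_algebra all_field.
Set Implicit Arguments. Unset Strict Implicit. Unset Printing Implicit Defensive.
Import GRing.Theory.
Local Open Scope ring_scope.

Definition right_invertible (R : nzRingType) (k n : nat) (M : 'M[{poly R}]_(k, n)) : Prop :=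
  exists Mt : 'M[{poly R}]_(n, k), M *m Mt = 1%:M.

Definition conv_code (R : nzRingType) (n : nat) (G : 'rV[{poly R}]_n) : 'rV[{poly R}]_n -> Prop :=
  fun v => exists u : {poly R}, v = u *: G.

(* The matrix H: entry (i, j) (0-based, i < n-1, j < n) is (z - alpha^(n-j))^(i+1),
   i.e. row i+1, column j+1 of the paper's (z - alpha^(n-(j+1)+1))^(i+1). *)
Definition Hmat (F : fieldType) (n : nat) (alpha : F) : 'M[{poly F}]_(n.-1, n) :=
  \matrix_(i < n.-1, j < n) ('X - (alpha ^+ (n - j))%:P) ^+ i.+1.

Definition Gmat (F : fieldType) (n : nat) (alpha : F) : 'rV[{poly F}]_n :=
  \sum_(nu < n) ('X ^+ nu) *: \row_(j < n) (alpha ^+ (j * nu))%:P.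

From HB Require Import structures.
From mathcomp Require Import all_boot all_order all_algebra all_field.
Set Implicit Arguments. Unset Strict Implicit. Unset Printing Implicit Defensive.
Import GRing.Theory.
Local Open Scope ring_scope.

(* Put beta_j := alpha^(n-j) = alpha^-j and complete H by the row of ones to
   the square matrix V = Hvdm = ((z - beta_j)^i)_{0 <= i, j < n}.  V is a
   Vandermonde matrix whose nodes z - beta_j differ by the nonzero constants
   beta_i - beta_j, so V is invertible over F[z] and H, made of its last n-1
   rows, is right invertible.  By orthogonality of the powers of alpha,
   sum_j G_j beta_j^k = n z^k for k < n, hence sum_j G_j f(beta_j) = n f(z)
   for every f of degree < n; with f(y) = (z - y)^i this gives
   G V^T = (n, 0, ..., 0).  As n != 0 in F and V^T is invertible, v H^T = 0
   forces v V^T to be a multiple of G V^T, i.e. v to be a multiple of G. *)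

Lemma Vandermonde_unitmx (R : comUnitRingType) n (a : 'rV[R]_n) :
  (forall i j : 'I_n, (i < j)%N -> a 0 j - a 0 i \is a GRing.unit) ->
  Vandermonde n a \in unitmx.
Proof.
move=> unit_diff; rewrite unitmxE det_Vandermonde.
by apply: unitr_prod => i _; apply: unitr_prod => j; apply: unit_diff.
Qed.

Lemma right_invertible_dsubmx (R : idomainType) m1 m2
    (M : 'M[{poly R}]_(m1 + m2)) :
  M \in unitmx -> right_invertible (dsubmx M).
Proof.
move=> M_unit; exists (rsubmx (invmx M)).
rewrite mulmx_rsub mul_dsub_mx mulmxV // scalar_mx_block.
exact: block_mxKdr.
Qed.

Lemma dsubmx_tr_kernelE (R : comUnitRingType) m (M : 'M[R]_(1 + m))
    (g : 'rV[R]_(1 + m)) (c : R) :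
  M \in unitmx -> c \is a GRing.unit -> g *m M^T = row_mx c%:M 0 ->
  forall v, (exists u, v = u *: g) <-> v *m (dsubmx M)^T = 0.
Proof.
move=> M_unit c_unit gM v.
have mul_tr_vsub (w : 'rV_(1 + m)) :
    w *m M^T = row_mx (w *m (usubmx M)^T) (w *m (dsubmx M)^T).
  by rewrite -{1}[M]vsubmxK tr_col_mx mul_mx_row.
have [_ gH] := eq_row_mx (etrans (esym (mul_tr_vsub g)) gM).
split=> [[u ->]|vH]; first by rewrite -scalemxAl gH scaler0.
exists ((v *m (usubmx M)^T) 0 0 / c).
have MT_unit : M^T \in unitmx by rewrite unitmx_tr.
apply: (can_inj (mulmxK MT_unit)).
rewrite -scalemxAl gM scale_row_mx scaler0 scale_scalar_mx divrK //.
by rewrite mul_tr_vsub vH -mx11_scalar.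
Qed.

Lemma sum_unity_root_expr (R : idomainType) (x : R) n :
  x ^+ n = 1 -> x != 1 -> \sum_(i < n) x ^+ i = 0.
Proof.
move=> xn1 x_neq1; apply/eqP; have /esym/eqP := subrX1 x n.
by rewrite xn1 subrr mulf_eq0 subr_eq0 (negbTE x_neq1).
Qed.

Section PrimitiveRoot.

Variables (F : fieldType) (n : nat) (alpha : F).
Hypothesis alpha_prim : n.-primitive_root alpha.

Local Notation beta j := (alpha ^+ (n - j)).

Lemma prim_expr_inj i j :
  (i < n)%N -> (j < n)%N -> alpha ^+ i = alpha ^+ j -> i = j.
Proof.
move=> lt_in lt_jn /eqP; rewrite (eq_prim_root_expr alpha_prim) !modn_small //.
exact/eqP.
Qed.

Lemma prim_expr_subn j : (j <= n)%N -> beta j = (alpha ^+ j)^-1.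
Proof.
by move=> le_jn; apply/esym/mulr1_eq; rewrite -exprD subnKC // prim_expr_order.
Qed.

Lemma sum_prim_root_exprM (nu k : 'I_n) :
  \sum_(j < n) alpha ^+ (j * nu) * beta j ^+ k = if nu == k then n%:R else 0.
Proof.
have alpha_neq0 : alpha != 0.
  by rewrite (prim_root_eq0 alpha_prim) -lt0n (prim_order_gt0 alpha_prim).
pose x := alpha ^+ nu / alpha ^+ k.
have -> : \sum_(j < n) alpha ^+ (j * nu) * beta j ^+ k = \sum_(j < n) x ^+ j.
  apply: eq_bigr => j _; rewrite prim_expr_subn 1?ltnW //.
  by rewrite exprMn !exprVn -!exprM (mulnC nu) (mulnC k).
rewrite {}/x; case: eqVneq => [<- | nu_neq_k].
  rewrite divff ?expf_neq0 //.
  by under eq_bigr do rewrite expr1n; rewrite sumr_const card_ord.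
apply: sum_unity_root_expr.
  rewrite exprMn exprVn -!exprM !(mulnC _ n) !exprM (prim_expr_order alpha_prim).
  by rewrite !expr1n invr1 mulr1.
apply: contra nu_neq_k => /eqP/divr1_eq/prim_expr_inj eq_nu_k.
by apply/eqP/val_inj/eq_nu_k.
Qed.

Definition Hvdm : 'M[{poly F}]_n :=
  Vandermonde n (\row_(j < n) ('X - (beta j)%:P)).

Lemma Hvdm_unitmx : Hvdm \in unitmx.
Proof.
apply: Vandermonde_unitmx => i j lt_ij.
rewrite !mxE opprB addrC addrA subrK -polyCB rmorph_unit // unitfE subr_eq0.
rewrite !prim_expr_subn 1?ltnW //; apply: contraTneq lt_ij => /invr_inj.
by move/prim_expr_inj => /(_ (ltn_ord i) (ltn_ord j)) ->; rewrite ltnn.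
Qed.

Lemma Gmat_sum_expr (k : 'I_n) :
  \sum_(j < n) Gmat n alpha 0 j * (beta j)%:P ^+ k = n%:R * 'X^k.
Proof.
transitivity (\sum_(nu < n)
    (\sum_(j < n) alpha ^+ (j * nu) * beta j ^+ k) *: 'X^nu).
  rewrite /Gmat; under eq_bigr => j _ do rewrite summxE mulr_suml.
  rewrite exchange_big /=; apply: eq_bigr => nu _.
  rewrite scaler_suml; apply: eq_bigr => j _.
  by rewrite !mxE -mul_polyC polyCM -polyC_exp [RHS]mulrC mulrA.
under eq_bigr => nu _ do rewrite sum_prim_root_exprM.
rewrite (bigD1 k) //= eqxx scaler_nat mulr_natl big1 ?addr0 // => nu /negPf ->.
by rewrite scale0r.
Qed.

Lemma Gmat_sum_horner (f : {poly {poly F}}) : (size f <= n)%N ->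
  \sum_(j < n) Gmat n alpha 0 j * f.[(beta j)%:P] = n%:R * f.['X].
Proof.
move=> size_f; rewrite (horner_coef_wide _ size_f) mulr_sumr.
under eq_bigr => j _ do rewrite (horner_coef_wide _ size_f) mulr_sumr.
rewrite exchange_big; apply: eq_bigr => k _ /=.
under eq_bigr => j _ do rewrite mulrCA.
by rewrite -mulr_sumr Gmat_sum_expr mulrCA.
Qed.

Lemma Gmat_mul_Hvdm_tr i : (Gmat n alpha *m Hvdm^T) 0 i = n%:R * 0 ^+ i.
Proof.
pose f : {poly {poly F}} := ('X%:P - 'X) ^+ i.
have size_f : (size f <= n)%N.
  apply: leq_trans (size_poly_exp_leq _ _) _.
  by rewrite -opprB size_polyN size_XsubC mul1n.
have -> : 0 ^+ i = f.['X] by rewrite /f !hornerE subrr.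
rewrite -Gmat_sum_horner // mxE; apply: eq_bigr => j _.
by rewrite !mxE /f !hornerE.
Qed.

End PrimitiveRoot.

Lemma Hmat_dsubmx (F : fieldType) m (alpha : F) :
  Hmat m.+1 alpha = dsubmx (Hvdm m.+1 alpha : 'M_(1 + m)).
Proof. by apply/matrixP => i j; rewrite !mxE. Qed.

Lemma Gmat_mul_Hvdm_tr_block (F : fieldType) m (alpha : F) :
  m.+1.-primitive_root alpha ->
  Gmat m.+1 alpha *m (Hvdm m.+1 alpha)^T = row_mx (m.+1)%:R%:M 0.
Proof.
move=> alpha_prim; apply/rowP => i; rewrite Gmat_mul_Hvdm_tr // mxE.
case: splitP => j ->; first by rewrite ord1 mxE expr0 mulr1.
by rewrite mxE exprS mul0r mulr0.
Qed.

Theorem theorem3p1 (F : finFieldType) (n : nat) (alpha : F)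
  (halpha : n.-primitive_root alpha) :
  right_invertible (Hmat n alpha)
  /\ Gmat n alpha *m (Hmat n alpha)^T = 0
  /\ (forall v : 'rV[{poly F}]_n,
        conv_code (Gmat n alpha) v <-> v *m (Hmat n alpha)^T = 0).
Proof.
have [m n_eq] : exists m, n = m.+1.
  by exists n.-1; rewrite prednK // (prim_order_gt0 halpha).
subst n; rewrite Hmat_dsubmx.
have Hvdm_unit := Hvdm_unitmx halpha.
have n_unit : ((m.+1)%:R : {poly F}) \is a GRing.unit.
  by rewrite -polyC_natr rmorph_unit // unitfE (prim_root_dvd_eq0 halpha).
have codeE := dsubmx_tr_kernelE Hvdm_unit n_unit (Gmat_mul_Hvdm_tr_block halpha).
split; first exact: (right_invertible_dsubmx (m1 := 1) Hvdm_unit).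
by split=> [|v]; [apply/codeE; exists 1; rewrite scale1r | exact: codeE].
Qed.
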